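(* Let $n\ge 2k\ge 6$. Let $\mathbb{S}$ be a $q$-covering design $\mathcal{C}_2(n-k+2,k,3)$ (a set of $k$-dimensional subspaces of $\mathbb{F}_2^{n-k+2}$ covering every $3$-dimensional subspace). Suppose $U_0\subseteq\mathbb{F}_2^{n-k+2}$ is an $(n-k)$-dimensional subspace and $U_1,U_2,U_3\subseteq\mathbb{F}_2^{n-k+2}$ are $(n-k+1)$-dimensional subspaces with $U_i\cap U_j=U_0$ for $1\le i<j\le 3$. Let $c_i=|\{X\in\mathbb{S}: X\subseteq U_i\}|$ for $i=0,1,2,3$, and suppose $c_1\le c_2\le c_3$. Then $$\mathcal{C}_2(n,k,3)\le 2^{3(n-k)}+\binom{k}{2}_2\,(|\mathbb{S}|-c_1-c_2-c_3+2c_0)+(2^k-1)(c_1-c_0)+\mathcal{C}_2(n-k,k,3).$$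
   Context: $\binom{k}{2}_2=\frac{(2^k-1)(2^{k-1}-1)}{3}$ is the Gaussian coefficient (number of $2$-dimensional subspaces of $\mathbb{F}_2^k$). A $q$-covering design $\mathcal{C}_q(n,k,r)$ is a collection of $k$-dimensional subspaces of $\mathbb{F}_q^n$ such that every $r$-dimensional subspace is contained in at least one member; $\mathcal{C}_q(n,k,r)$ is the minimum size of such a collection. *)

From HB Require Import structures.
From mathcomp Require Import all_boot all_order all_algebra all_fingroup.
Set Implicit Arguments. Unset Strict Implicit. Unset Printing Implicit Defensive.
Import GRing.Theory.

(* A subspace of F_2^m is represented canonically by the square matrix
   <<A>>%MS (its row space, in canonical form). *)
Definition subspace (m : nat) (X : 'M['F_2]_m) : bool := (<<X>>%MS == X).

Definition is_covering (m k r : nat) (S : {set 'M['F_2]_m}) : bool :=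
  [forall X in S, subspace X && (\rank X == k)] &&
  [forall Y : 'M['F_2]_m, (subspace Y && (\rank Y == r)) ==>
       [exists X in S, (Y <= X)%MS]].

(* Minimum size of a covering design C_2(m,k,r) (default value #|{set 'M_m}|
   if none exists, which never happens for r <= k <= m). *)
Definition covering_number (m k r : nat) : nat :=
  \big[minn/#|{: {set 'M['F_2]_m}}|]_(S : {set 'M['F_2]_m} | is_covering k r S) #|S|.

Definition gauss2 (k : nat) : nat := ((2 ^ k - 1) * (2 ^ k.-1 - 1)) %/ 3.

From HB Require Import structures.
From mathcomp Require Import all_boot all_order all_algebra all_fingroup all_field.
From mathcomp Require Import ring zify.
Set Implicit Arguments. Unset Strict Implicit. Unset Printing Implicit Defensive.
Import GRing.Theory.
Local Open Scope ring_scope.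

(* Write F_2^n = F_2^m x F_2^k with m = n - k.  A 3-space Y is classified by
   the rank d of its projection R onto F_2^k, and the covering is the union
   of four block families:
   - d = 0: a minimal covering C_2(m, k, 3) embedded in F_2^m x 0;
   - d = 3: Y is the graph of a linear map on R; a Gabidulin-type family of
     2^(3m) matrices A interpolating any values on three independent vectors
     (built from linearized polynomials over F_(2^m)) gives the blocks
     {(x J A, x) : x in F_2^k}, J a fixed embedding F_2^k -> F_2^m;
   - d = 1, 2: Y is the image, under a map phi_Q : F_2^(m+2) -> F_2^(m+k)
     sending U0 onto F_2^m and a complement onto a plane Q of F_2^k, of a
     3-space covered by a block X of S; X either avoids U1, U2, U3 (one block
     per plane of F_2^k, at most [k 2]_2 of them) or lies in U1 but not U0
     (one block per nonzero v in F_2^k, through an injective family of planes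
     <v, sig v> taken from F_(2^k)).
   Counting the blocks and an inclusion-exclusion on S give the theorem. *)

Lemma F2_cases (a : 'F_2) : a = 0 \/ a = 1.
Proof. by case: a => [[|[|i]] hi]; [left; apply/val_inj | right; apply/val_inj |]. Qed.

Lemma additive0 (U V : zmodType) (f : U -> V) : {morph f : x y / x + y} -> f 0 = 0.
Proof. by move=> fD; apply: (@addrI _ (f 0)); rewrite -fD !addr0. Qed.

Lemma inv_additive (U V : zmodType) (f : U -> V) (g : V -> U) :
  cancel f g -> cancel g f -> {morph f : x y / x + y} -> {morph g : x y / x + y}.
Proof. by move=> fK gK fD x y; apply: (can_inj fK); rewrite fD !gK. Qed.

Lemma additive_F2_scale m n (f : 'rV['F_2]_m -> 'rV['F_2]_n) :
  {morph f : x y / x + y} -> forall a x, f (a *: x) = a *: f x.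
Proof.
move=> fD a x; have f0 := additive0 fD.
by case: (F2_cases a) => ->; rewrite ?scale0r ?scale1r.
Qed.

Lemma additive_eq_on_span p m n (X : 'M['F_2]_(p, m)) (f g : 'rV['F_2]_m -> 'rV['F_2]_n) :
  {morph f : x y / x + y} -> {morph g : x y / x + y} ->
  (forall i, f (row i X) = g (row i X)) -> forall l : 'rV_p, f (l *m X) = g (l *m X).
Proof.
move=> fD gD fgX l; rewrite mulmx_sum_row (big_morph f fD (additive0 fD)).
rewrite (big_morph g gD (additive0 gD)); apply: eq_bigr => i _.
by rewrite !additive_F2_scale ?fgX.
Qed.

Definition mx_of_additive m n (f : 'rV['F_2]_m -> 'rV['F_2]_n) : 'M['F_2]_(m, n) :=
  \matrix_(i < m) f (delta_mx 0 i).

Lemma mx_of_additiveE m n (f : 'rV['F_2]_m -> 'rV['F_2]_n) :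
  {morph f : x y / x + y} -> forall u, u *m mx_of_additive f = f u.
Proof.
move=> fD u; rewrite mulmx_sum_row {2}(row_sum_delta u).
rewrite (big_morph f fD (additive0 fD)); apply: eq_bigr => i _.
by rewrite rowK additive_F2_scale.
Qed.

Lemma F2_field_model m : (0 < m)%N ->
  exists (F : finFieldType) (iota : F -> 'rV['F_2]_m) (coord : 'rV['F_2]_m -> F),
    [/\ 2%N \in [pchar F], #|F| = (2 ^ m)%N, {morph iota : x y / x + y},
        cancel iota coord & cancel coord iota].
Proof.
move=> m_gt0; have [F F_pchar cardF] := pPrimePowerField (isT : prime 2) m_gt0.
have [f lin_f [g fK gK]] := pprimeChar_vectAxiom F_pchar.
have dimF : logn 2 #|pPrimeCharType F_pchar| = m by rewrite cardF pfactorK.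
move: f lin_f g fK gK; rewrite dimF => f lin_f g fK gK.
exists F, f, g; split => // x y.
by have := lin_f 1 x y; rewrite !scale1r.
Qed.

Definition linpoly (R : nzRingType) r (c : 'I_r -> R) : {poly R} :=
  \sum_(i < r) c i *: 'X^(2 ^ i).

Lemma coef_linpoly (R : nzRingType) r (c : 'I_r -> R) (j : 'I_r) :
  (linpoly c)`_(2 ^ j) = c j.
Proof.
rewrite /linpoly coef_sum (bigD1 j) //= coefZ coefXn eqxx mulr1 big1 ?addr0 //.
move=> i ij; rewrite coefZ coefXn eqn_exp2l //.
by case: eqP => [/val_inj ji | _]; [rewrite ji eqxx in ij | rewrite mulr0].
Qed.

Lemma size_linpoly (R : nzRingType) r (c : 'I_r -> R) : (size (linpoly c) <= 2 ^ r)%N.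
Proof.
apply: leq_trans (size_sum _ _ _) _; apply/bigmax_leqP => i _.
by apply: leq_trans (size_scale_leq _ _) _; rewrite size_polyXn ltn_exp2l.
Qed.

Lemma linpolyD (R : comNzRingType) r (c : 'I_r -> R) : 2%N \in [pchar R] ->
  {morph horner (linpoly c) : x y / x + y}.
Proof.
move=> R_pchar x y; rewrite /linpoly !horner_sum -big_split; apply: eq_bigr => i _.
rewrite !hornerZ !hornerXn exprDn_pchar; first exact: mulrDr.
by rewrite pnatX pnatE // R_pchar.
Qed.

Lemma linpoly_eq_on (F : fieldType) r (c d : 'I_r -> F) (s : seq F) :
  uniq s -> (2 ^ r <= size s)%N ->
  {in s, forall x, (linpoly c).[x] = (linpoly d).[x]} -> forall j, c j = d j.
Proof.
move=> s_uniq s_size cd_s j; pose p := linpoly c - linpoly d.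
have p0 : p = 0.
  apply/eqP; apply: contraT => p_neq0.
  have s_roots : all (root p) s.
    by apply/allP => x /cd_s xs; rewrite /root /p hornerD hornerN xs subrr.
  have p_small : (size p <= size s)%N.
    apply: leq_trans s_size; apply: leq_trans (size_polyD _ _) _.
    by rewrite size_polyN geq_max !size_linpoly.
  by have := max_poly_roots p_neq0 s_roots s_uniq; rewrite ltnNge p_small.
by apply/eqP; rewrite -subr_eq0 -!coef_linpoly -coefB -/p p0 coef0.
Qed.

Lemma linearized_interpolation r m : exists H : {set 'M['F_2]_m},
  (#|H| <= 2 ^ (r * m))%N /\
  forall X C : 'M['F_2]_(r, m), row_free X -> exists2 A, A \in H & X *m A = C.
Proof.
case: (posnP m) => [-> | m_gt0].
  exists [set 0]; split; first by rewrite cards1 muln0.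
  by move=> X C _; exists 0; rewrite ?set11 //; apply/matrixP => i [].
have [F [iota [coord [F_pchar cardF iotaD iotaK coordK]]]] := F2_field_model m_gt0.
have coordD := inv_additive iotaK coordK iotaD.
pose h (c : {ffun 'I_r -> F}) v := iota (linpoly c).[coord v].
have hD c : {morph h c : x y / x + y}.
  by move=> x y; rewrite /h coordD linpolyD // iotaD.
exists [set mx_of_additive (h c) | c : {ffun 'I_r -> F}]; split.
  by apply: leq_trans (leq_imset_card _ _) _; rewrite card_ffun cardF card_ord -expnM mulnC.
move=> X C X_free.
pose eval (c : {ffun 'I_r -> F}) := [ffun i => (linpoly c).[coord (row i X)]].
have eval_inj : injective eval.
  move=> c d /ffunP cdX; apply/ffunP; apply: (linpoly_eq_on (s := [seq coord (l *m X) | l : 'rV_r])).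
  - rewrite map_inj_uniq ?enum_uniq // => l1 l2 /(can_inj coordK).
    exact: row_free_inj.
  - by rewrite size_map -cardE card_mx card_Fp // mul1n.
  move=> _ /mapP [l _ ->]; apply: (can_inj iotaK).
  apply: (additive_eq_on_span (hD c) (hD d)) => i.
  by rewrite /h; have := cdX i; rewrite !ffunE => ->.
have [inv_eval _ evalK] := injF_bij eval_inj.
pose c := inv_eval [ffun i => coord (row i C)].
exists (mx_of_additive (h c)); first exact: imset_f.
apply/row_matrixP => i; rewrite row_mul mx_of_additiveE //.
have /ffunP/(_ i) := evalK [ffun i => coord (row i C)].
by rewrite !ffunE -/c /h => ->.
Qed.

Lemma sub_col2 (F : fieldType) n (u v w : 'rV[F]_n) :
  (u <= col_mx v w)%MS -> exists a b : F, u = a *: v + b *: w.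
Proof.
case/submxP => D ->; rewrite -[D]hsubmxK mul_row_col.
rewrite [lsubmx D]mx11_scalar [rsubmx D]mx11_scalar !mul_scalar_mx.
by eexists; eexists.
Qed.

Lemma col_mx_subl (F : fieldType) m1 m2 n (A : 'M[F]_(m1, n)) (B : 'M[F]_(m2, n)) :
  (A <= col_mx A B)%MS.
Proof. by rewrite -addsmxE addsmxSl. Qed.

Lemma col_mx_subr (F : fieldType) m1 m2 n (A : 'M[F]_(m1, n)) (B : 'M[F]_(m2, n)) :
  (B <= col_mx A B)%MS.
Proof. by rewrite -addsmxE addsmxSr. Qed.

Section PlaneFamily.

(* A field F of characteristic 2 identified additively with F_2^k, and an
   element al outside F_4.  The map v |-> <v, al v> sends distinct nonzero
   vectors to distinct planes. *)
Variables (F : finFieldType) (k : nat).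
Variables (iota : F -> 'rV['F_2]_k) (coord : 'rV['F_2]_k -> F).
Hypotheses (F_pchar : 2%N \in [pchar F]) (iotaD : {morph iota : x y / x + y}).
Hypotheses (iotaK : cancel iota coord) (coordK : cancel coord iota).
Variable al : F.
Hypothesis al_notin_F4 : al ^+ 4 != al.

Let coordD : {morph coord : x y / x + y} := inv_additive iotaK coordK iotaD.

Lemma F_two0 : 1 + 1 = 0 :> F.
Proof. by rewrite -mulr2n (pcharf0 F_pchar). Qed.

Lemma coord_scale (a : 'F_2) u :
  exists2 a' : F, a' = 0 \/ a' = 1 & coord (a *: u) = a' * coord u.
Proof.
case: (F2_cases a) => ->; last by exists 1; [right | rewrite scale1r mul1r].
by exists 0; [left | rewrite scale0r mul0r (additive0 coordD)].
Qed.

Lemma al_sqr_indep (c e : F) : c = 0 \/ c = 1 -> e = 0 \/ e = 1 -> al ^+ 2 != c + e * al.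
Proof.
move=> c01 e01; apply: contra al_notin_F4 => /eqP al2.
have sqrD (x y : F) : (x + y) ^+ 2 = x ^+ 2 + y ^+ 2 by rewrite exprDn_pchar // pnatE.
have two0 := F_two0.
have al4 : al ^+ 4 = (al ^+ 2) ^+ 2 by rewrite -exprM.
move: al2; case: c01 => ->; case: e01 => -> al2; rewrite ?mul0r ?mul1r ?addr0 ?add0r in al2.
- by move/eqP: al2; rewrite expf_eq0 /= => /eqP ->; rewrite expr0n.
- by rewrite al4 !al2.
- have /eqP : (al + 1) ^+ 2 = 0 by rewrite sqrD al2 expr1n.
  rewrite expf_eq0 /= addr_eq0 => /eqP ->.
  have m1 : -1 = 1 :> F by rewrite -[LHS]addr0 -two0 addKr.
  by rewrite m1 expr1n.
- by rewrite al4 al2 sqrD al2 expr1n addrA two0 add0r.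
Qed.

Definition partner (v : 'rV['F_2]_k) : 'rV['F_2]_k := iota (al * coord v).

Lemma coord_neq0 v : v != 0 -> coord v != 0.
Proof. by apply: contra => /eqP v0; rewrite -[v]coordK v0 (additive0 iotaD). Qed.

Lemma al_neq01 : al != 0 /\ al != 1.
Proof.
by split; apply: contra al_notin_F4 => /eqP ->; rewrite ?expr0n ?expr1n.
Qed.

Lemma partner_rank v : v != 0 -> \rank (col_mx v (partner v)) = 2%N.
Proof.
move=> v_neq0; apply/eqP; rewrite eqn_leq rank_leq_row /=.
apply: (@leq_trans (\rank v).+1); first by rewrite rank_rV v_neq0.
apply: rank_ltmx; rewrite ltmxE col_mx_subl /= col_mx_sub submx_refl /=.
apply/negP => /sub_rVP [a va].
have [a' a'01] := coord_scale a v; rewrite -va /partner iotaK => /eqP.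
rewrite -subr_eq0 -mulrBl mulf_eq0 (negPf (coord_neq0 v_neq0)) orbF subr_eq0.
by have [al0 al1] := al_neq01; case: a'01 => ->; apply/negP.
Qed.

Lemma partner_inj v w : v != 0 -> w != 0 ->
  (col_mx w (partner w) <= col_mx v (partner v))%MS -> w = v.
Proof.
move=> v_neq0 w_neq0; rewrite col_mx_sub => /andP [wP pwP].
have [a [b wE]] := sub_col2 wP; have [c [d pwE]] := sub_col2 pwP.
have [a' a'01 ea] := coord_scale a v; have [b' b'01 eb] := coord_scale b (partner v).
have [c' c'01 ec] := coord_scale c v; have [d' d'01 ed] := coord_scale d (partner v).
pose x := coord v; pose y := coord w.
have yE : y = a' * x + b' * (al * x) by rewrite /y wE coordD ea eb /partner iotaK.
have alyE : al * y = c' * x + d' * (al * x).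
  by have := congr1 coord pwE; rewrite coordD ec ed /partner !iotaK.
have x_neq0 : x != 0 by apply: coord_neq0.
case: b'01 => b'E.
  rewrite b'E mul0r addr0 in yE; case: a'01 => a'E.
    by move: (coord_neq0 w_neq0); rewrite -/y yE a'E mul0r eqxx.
  by rewrite -[w]coordK -/y yE a'E mul1r /x coordK.
rewrite b'E mul1r in yE.
have aa0 : a' + a' = 0 by case: a'01 => ->; rewrite ?addr0 ?F_two0.
have /eqP : (al ^+ 2 - (c' + (d' + a') * al)) * x = 0.
  have -> : (al ^+ 2 - (c' + (d' + a') * al)) * x =
      al * y - (c' * x + d' * (al * x)) - (a' + a') * al * x by rewrite yE; ring.
  by rewrite aa0 alyE subrr !mul0r subr0.
rewrite mulf_eq0 (negPf x_neq0) orbF subr_eq0 => al2.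
have da01 : d' + a' = 0 \/ d' + a' = 1.
  by case: d'01 => ->; case: a'01 => ->; rewrite ?addr0 ?add0r ?F_two0; [left | right | right | left].
by move: (al_sqr_indep c'01 da01); rewrite al2.
Qed.

End PlaneFamily.

Lemma exists_notin_F4 (F : finFieldType) : (4 < #|F|)%N -> exists al : F, al ^+ 4 != al.
Proof.
move=> F_big; apply/existsP; apply: contraT; rewrite negb_exists => /forallP F4.
pose q : {poly F} := 'X^4 - 'X.
have size_q : size q = 5%N by rewrite /q size_polyDl ?size_polyXn // size_polyN size_polyX.
have q_neq0 : q != 0 by rewrite -size_poly_eq0 size_q.
have q_roots : all (root q) (enum F).
  by apply/allP => z _; rewrite /root /q !hornerE subr_eq0; have := F4 z; rewrite negbK.
by have := max_poly_roots q_neq0 q_roots (enum_uniq _); rewrite -cardE size_q ltnNge F_big.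
Qed.

Lemma plane_family k : (3 <= k)%N -> exists sig : 'rV['F_2]_k -> 'rV['F_2]_k,
  (forall v, v != 0 -> \rank (col_mx v (sig v)) = 2%N) /\
  (forall v w, v != 0 -> w != 0 -> (col_mx w (sig w) <= col_mx v (sig v))%MS -> w = v).
Proof.
move=> k_ge3; have [F [iota [coord [F_pchar cardF iotaD iotaK coordK]]]] :=
  F2_field_model (ltnW (ltnW k_ge3)).
have [al al_notin_F4] : exists al : F, al ^+ 4 != al.
  by apply: exists_notin_F4; rewrite cardF; apply: (@leq_trans (2 ^ 3)); rewrite ?leq_exp2l.
exists (partner iota coord al); split.
  exact: partner_rank.
exact: partner_inj.
Qed.

Definition planes k := [set P : 'M['F_2]_k | subspace P && (\rank P == 2%N)].

Definition indep_pairs k :=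
  [set vw : 'rV['F_2]_k * 'rV['F_2]_k | \rank (col_mx vw.1 vw.2) == 2%N].

Definition pair_span k (vw : 'rV['F_2]_k * 'rV['F_2]_k) : 'M['F_2]_k :=
  <<col_mx vw.1 vw.2>>%MS.

Lemma card_indep_pairs k : (#|indep_pairs k| <= (2 ^ k - 1) * (2 ^ k - 2))%N.
Proof.
have card_rV : #|'rV['F_2]_k| = (2 ^ k)%N by rewrite card_mx card_Fp // mul1n.
rewrite -sum1_card (eq_bigl (fun vw => predT vw.1 && (\rank (col_mx vw.1 vw.2) == 2%N)));
  last by move=> vw; rewrite inE.
rewrite -(pair_big_dep predT (fun v w => \rank (col_mx v w) == 2%N) (fun _ _ => 1%N)) /=.
have dep_rank (u v w : 'rV['F_2]_k) : (col_mx v w <= u)%MS -> \rank (col_mx v w) != 2%N.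
  move=> /mxrankS; rewrite rank_rV => r_le; apply/eqP => r2.
  by move: r_le; rewrite r2; case: (u != 0).
rewrite (bigD1 0) //= big1 ?add0n; last first.
  by move=> w; apply: contraTeq => _; apply: (dep_rank w); rewrite col_mx_sub sub0mx submx_refl.
apply: (@leq_trans (\sum_(v | v != 0) (2 ^ k - 2)%N)).
  apply: leq_sum => v v_neq0; rewrite sum1_card.
  apply: (@leq_trans #|~: [set 0; v]|).
    apply: subset_leq_card; apply/subsetP => w; rewrite !inE; apply: contraL.
    by case/orP => /eqP ->; apply: (dep_rank v); rewrite col_mx_sub submx_refl ?sub0mx.
  by have := cardsC [set 0; v]; rewrite cards2 eq_sym v_neq0 card_rV => <-; rewrite addKn.
rewrite sum_nat_const leq_mul2r; apply/orP; right.
have := cardC1 (0 : 'rV['F_2]_k); rewrite card_rV subn1 => <-.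
by apply: eq_leq; apply: eq_card => v; rewrite !inE.
Qed.

Lemma exists_basis (F : fieldType) m n (P : 'M[F]_(m, n)) r : \rank P = r ->
  exists W : 'M[F]_(r, n), (W :=: P)%MS /\ row_free W.
Proof. by move=> <-; exists (row_base P); split; [exact: eq_row_base | exact: row_base_free]. Qed.

(* A plane has 6 = |GL_2(F_2)| ordered bases: the rows of G W, for G invertible
   and W a fixed basis. *)
Lemma plane_ordered_bases k P : P \in planes k ->
  (6 <= #|[set vw in indep_pairs k | pair_span vw == P]|)%N.
Proof.
rewrite inE => /andP [P_sub /eqP rP]; have [W [WP W_free]] := exists_basis rP.
pose GW (G : {'GL_2['F_2]}) : 'M['F_2]_(1 + 1, k) := GLval G *m W.
pose rows_of G := (usubmx (GW G), dsubmx (GW G)).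
have GW_col G : col_mx (rows_of G).1 (rows_of G).2 = GLval G *m W by rewrite vsubmxK.
have rows_inj : injective rows_of.
  move=> G1 G2 /(congr1 (fun vw => col_mx vw.1 vw.2)); rewrite !GW_col.
  by move/(row_free_inj W_free) => G12; apply: val_inj.
have card_GL : #|('GL_2['F_2])%g| = 6%N by rewrite card_GL_2 card_Fp.
rewrite -card_GL -(card_imset _ rows_inj); apply: subset_leq_card.
apply/subsetP => _ /imsetP [G _ ->]; rewrite !inE /pair_span GW_col.
have GW_P : (GW G :=: P)%MS.
  by apply: eqmx_trans WP; apply: eqmxMfull; rewrite row_full_unit; exact: (GL_unit G).
by rewrite mxrankMfree // mxrank_unit ?(GL_unit G) // eqxx (eq_genmx GW_P) (eqP P_sub) /=.
Qed.

Lemma card_planes k : (#|planes k| <= gauss2 k)%N.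
Proof.
have six_planes : (#|planes k| * 6 <= #|indep_pairs k|)%N.
  rewrite -[#|indep_pairs k|]sum1_card (partition_big (@pair_span k) (mem (planes k))) /=;
    last by move=> vw; rewrite !inE /pair_span /subspace genmx_id eqxx mxrank_gen.
  rewrite -sum_nat_const; apply: leq_sum => P /plane_ordered_bases.
  by move/leq_trans; apply; rewrite -sum1_card; apply: eq_leq; apply: eq_bigl => vw; rewrite !inE.
move: (leq_trans six_planes (card_indep_pairs k)); rewrite /gauss2 leq_divRL //.
move: (#|planes k|) => p; clear six_planes.
case: k => [|k]; first by rewrite expn0 subnn !mul0n leqn0 muln_eq0 orbF => /eqP ->.
rewrite expnS /=; have : (0 < 2 ^ k)%N by rewrite expn_gt0.
move: (2 ^ k)%N => a a_gt0 h; nia.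
Qed.

Lemma exists_notin_rowspace (F : fieldType) m n (A : 'M[F]_(m, n)) : (\rank A < n)%N ->
  exists v : 'rV[F]_n, ~~ (v <= A)%MS.
Proof.
move=> A_small; case: (pickP (fun i => ~~ (row i 1%:M <= A)%MS)) => [i Ai | A_full].
  by exists (row i 1%:M).
have : (1%:M <= A)%MS by apply/row_subP => i; have := A_full i; move/negbFE.
by move=> /mxrankS; rewrite mxrank1 leqNgt A_small.
Qed.

Lemma rank_col_mx1 (F : fieldType) m n (A : 'M[F]_(m, n)) (v : 'rV[F]_n) :
  ~~ (v <= A)%MS -> \rank (col_mx A v) = (\rank A).+1.
Proof.
move=> vA; apply/eqP; rewrite eqn_leq; apply/andP; split.
  rewrite -addsmxE; apply: leq_trans (mxrank_adds_leqif A v) _.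
  by rewrite -(addn1 (\rank A)) leq_add2l rank_rV; case: (v != 0).
by apply: rank_ltmx; rewrite ltmxE col_mx_subl /= col_mx_sub negb_and vA orbT.
Qed.

Lemma extend_to_subspace m k (Y : 'M['F_2]_m) : (\rank Y <= k <= m)%N ->
  exists X : 'M['F_2]_m, [&& subspace X, \rank X == k & (Y <= X)%MS].
Proof.
move Hd: (k - \rank Y)%N => d; elim: d Y Hd => [|d IH] Y Hd /andP [Yk km].
  exists <<Y>>%MS; rewrite /subspace genmx_id eqxx mxrank_gen genmxE submx_refl andbT /=.
  by rewrite eqn_leq Yk -subn_eq0 Hd.
have Ym : (\rank Y < m)%N by apply: leq_trans km; rewrite -subn_gt0 Hd.
have [v vY] := exists_notin_rowspace Ym.
have [||X /and3P [X_sub rX YvX]] := IH <<col_mx Y v>>%MS.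
- by rewrite mxrank_gen rank_col_mx1 // subnS Hd.
- by rewrite mxrank_gen rank_col_mx1 // km andbT -subn_gt0 Hd.
exists X; rewrite X_sub rX /=; apply: submx_trans YvX.
by rewrite genmxE col_mx_subl.
Qed.

Lemma covering_number_le m k r (S : {set 'M['F_2]_m}) : is_covering k r S ->
  (covering_number m k r <= #|S|)%N.
Proof.
move=> S_cov; rewrite /covering_number -minEnat.
by have := @Order.TotalTheory.bigmin_le_cond _ _ _ #|{: {set 'M['F_2]_m}}| S
  (fun S => is_covering k r S) (fun S => #|S|) S_cov.
Qed.

Lemma covering_number_attained m k r : (r <= k <= m)%N ->
  exists2 S : {set 'M['F_2]_m}, is_covering k r S & #|S| = covering_number m k r.
Proof.
move=> /andP [rk km].
pose all_k := [set X : 'M['F_2]_m | subspace X && (\rank X == k)].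
have all_k_cov : is_covering k r all_k.
  apply/andP; split; first by apply/forallP => X; apply/implyP; rewrite inE.
  apply/forallP => Y; apply/implyP => /andP [_ /eqP rY].
  have [|X /and3P [X_sub rX YX]] := @extend_to_subspace m k Y; first by rewrite rY rk.
  by apply/existsP; exists X; rewrite inE X_sub rX YX.
have S_small (S : {set 'M['F_2]_m}) : is_covering k r S -> (#|S| <= #|{: {set 'M['F_2]_m}}|)%O.
  move=> _; rewrite leEnat; apply: leq_trans (max_card (mem S)) _.
  rewrite -(card_imset predT (@set1_inj _)); exact: max_card.
have [S0 S0_cov S0_min] := @Order.TotalTheory.eq_bigmin _ _ _ #|{: {set 'M['F_2]_m}}|
  all_k (fun S => is_covering k r S) (fun S => #|S|) all_k_cov S_small.
by exists S0; rewrite // /covering_number -minEnat S0_min.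
Qed.

Definition embed (F : fieldType) m k : 'M[F]_(m, m + k) := row_mx 1%:M 0.

Lemma embed_free (F : fieldType) m k : row_free (embed F m k).
Proof.
by apply/row_freeP; exists (col_mx 1%:M 0); rewrite mul_row_col mulmx1 mul0mx addr0.
Qed.

Lemma rank_hyperplane_image (F : fieldType) n p (U0 V : 'M[F]_n) (M : 'M[F]_(n, p)) :
  (U0 <= V)%MS -> \rank V = (\rank U0).+1 -> U0 *m M = 0 -> (\rank (V *m M) <= 1)%N.
Proof.
move=> U0V rV U0M; have := mxrank_mul_ker V M.
have /mxrankS : (U0 <= V :&: kermx M)%MS by rewrite sub_capmx U0V sub_kermx U0M eqxx.
by rewrite rV; lia.
Qed.

Section AdaptedLift.

Variables (F : fieldType) (m k : nat) (U0 U1 : 'M[F]_(m + 2)).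
Hypotheses (rU0 : \rank U0 = m) (rU1 : \rank U1 = (m + 1)%N) (U01 : (U0 <= U1)%MS).

Lemma adapted_basis : exists (B0 : 'M[F]_(m, m + 2)) (u1 u2 : 'rV[F]_(m + 2)),
  [/\ (B0 :=: U0)%MS, (col_mx B0 u1 :=: U1)%MS & col_mx B0 (col_mx u1 u2) \in unitmx].
Proof.
have [B0 [B0U0 _]] := exists_basis rU0.
have [u1 u1U1 u1U0] : exists2 u1 : 'rV[F]_(m + 2), (u1 <= U1)%MS & ~~ (u1 <= U0)%MS.
  case: (pickP (fun i => ~~ (row i U1 <= U0)%MS)) => [i U1i | U1U0].
    by exists (row i U1); rewrite ?row_sub.
  have : (U1 <= U0)%MS by apply/row_subP => i; have := U1U0 i; move/negbFE.
  by move=> /mxrankS; rewrite rU1 rU0 addn1 ltnn.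
have [u2 u2U1] : exists u2 : 'rV[F]_(m + 2), ~~ (u2 <= U1)%MS.
  by apply: exists_notin_rowspace; rewrite rU1 ltn_add2l.
have B0u1_rank : \rank (col_mx B0 u1) = (m + 1)%N by rewrite rank_col_mx1 B0U0 ?rU0 ?addn1.
have B0u1U1 : (col_mx B0 u1 :=: U1)%MS.
  have sub : (col_mx B0 u1 <= U1)%MS by rewrite col_mx_sub u1U1 B0U0 U01.
  by apply/eqmxP; rewrite -(geq_leqif (mxrank_leqif_eq sub)) B0u1_rank rU1.
exists B0, u1, u2; split => //.
rewrite -row_free_unit /row_free eqn_leq rank_leq_row /=.
have sub : (col_mx (col_mx B0 u1) u2 <= col_mx B0 (col_mx u1 u2))%MS.
  rewrite !col_mx_sub col_mx_subl /=.
  by rewrite !(submx_trans _ (col_mx_subr B0 (col_mx u1 u2))) ?col_mx_subl ?col_mx_subr.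
apply: leq_trans (mxrankS sub); rewrite rank_col_mx1 ?B0u1U1 // rU1; lia.
Qed.

(* A family of maps F^(m+2) -> F^(m+k), indexed by 2 x k matrices Q, which
   send U0 onto F^m x 0 and the two remaining basis vectors onto the rows of Q. *)
Lemma lift_maps : exists phi : 'M[F]_(2, k) -> 'M[F]_(m + 2, m + k),
  [/\ forall Q, \rank Q = 2%N -> row_free (phi Q),
      forall Q, U0 *m rsubmx (phi Q) = 0,
      forall Q (L : 'M[F]_(3, m)) (D : 'M[F]_(3, 2)),
        exists Z, Z *m phi Q = row_mx L (D *m Q)
    & forall (a b : 'rV[F]_k) (L : 'M[F]_(3, m)) (d : 'cV[F]_3),
        exists2 Z, (Z <= U1)%MS & Z *m phi (col_mx a b) = row_mx L (d *m a)].
Proof.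
have [B0 [u1 [u2 [B0U0 B0u1U1 T_unit]]]] := adapted_basis.
pose T := col_mx B0 (col_mx u1 u2).
pose Psi (Q : 'M[F]_(2, k)) : 'M[F]_(m + 2, m + k) := col_mx (embed F m k) (row_mx 0 Q).
pose phi Q := invmx T *m Psi Q.
have T_phi Q : T *m phi Q = Psi Q by rewrite mulKVmx.
have B0_phi Q : B0 *m phi Q = embed F m k.
  by move: (T_phi Q); rewrite /T /Psi !mul_col_mx => /eq_col_mx [].
have u1_phi (a b : 'rV[F]_k) : u1 *m phi (col_mx a b) = row_mx 0 a.
  have split_rows : row_mx (0 : 'M[F]_(1 + 1, m)) (col_mx a b) =
      col_mx (row_mx 0 a) (row_mx 0 b) by rewrite -col_mx0 -block_mxEh block_mxEv.
  move: (T_phi (col_mx a b)); rewrite /T /Psi !mul_col_mx => /eq_col_mx [_].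
  by rewrite split_rows => /(@eq_col_mx _ 1 1) [].
exists phi; split.
- move=> Q rQ; have /row_freeP [Q' QQ'] : row_free Q by rewrite /row_free rQ.
  apply/row_freeP; exists (block_mx 1%:M 0 0 Q' *m T).
  rewrite /phi -mulmxA (mulmxA (Psi Q)) /Psi /embed -block_mxEv mulmx_block.
  rewrite !mulmx0 !mul0mx !mulmx1 !addr0 add0r QQ' -scalar_mx_block mul1mx.
  by rewrite mulVmx.
- move=> Q; have /submxP [D ->] : (U0 <= B0)%MS by rewrite B0U0.
  by rewrite -mulmxA mulmx_rsub B0_phi row_mxKr mulmx0.
- move=> Q L D; exists (row_mx L D *m T); rewrite -mulmxA T_phi /Psi mul_row_col.
  by rewrite /embed !mul_mx_row mulmx1 !mulmx0 add_row_mx addr0 add0r.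
move=> a b L d; exists (row_mx L d *m col_mx B0 u1).
  by rewrite -B0u1U1 submxMl.
rewrite -mulmxA mul_col_mx B0_phi u1_phi mul_row_col /embed.
by rewrite !mul_mx_row mulmx1 !mulmx0 add_row_mx addr0 add0r.
Qed.

End AdaptedLift.

Section Construction.

Variables (m k : nat).
Hypothesis k_le_m : (k <= m)%N.
Variable S : {set 'M['F_2]_(m + 2)}.
Hypothesis S_cov : is_covering k 3 S.
Variables U0 U1 U2 U3 : 'M['F_2]_(m + 2).
Hypotheses (rU0 : \rank U0 = m) (rU1 : \rank U1 = (m + 1)%N).
Hypotheses (rU2 : \rank U2 = (m + 1)%N) (rU3 : \rank U3 = (m + 1)%N).
Hypotheses (U12 : (U1 :&: U2 == U0)%MS) (U13 : (U1 :&: U3 == U0)%MS).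
Variable SE : {set 'M['F_2]_m}.
Hypothesis SE_cov : is_covering k 3 SE.
Variable H : {set 'M['F_2]_m}.
Hypothesis H_interp :
  forall X C : 'M['F_2]_(3, m), row_free X -> exists2 A, A \in H & X *m A = C.
Variable sig : 'rV['F_2]_k -> 'rV['F_2]_k.
Hypothesis sig_rank : forall v, v != 0 -> \rank (col_mx v (sig v)) = 2%N.
Hypothesis sig_inj : forall v w, v != 0 -> w != 0 ->
  (col_mx w (sig w) <= col_mx v (sig v))%MS -> w = v.
Variable phi : 'M['F_2]_(2, k) -> 'M['F_2]_(m + 2, m + k).
Hypothesis phi_free : forall Q, \rank Q = 2%N -> row_free (phi Q).
Hypothesis phi_U0 : forall Q, U0 *m rsubmx (phi Q) = 0.
Hypothesis phi_lift : forall Q (L : 'M['F_2]_(3, m)) (D : 'M['F_2]_(3, 2)),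
  exists Z, Z *m phi Q = row_mx L (D *m Q).
Hypothesis phi_lift_line : forall (a b : 'rV['F_2]_k) (L : 'M['F_2]_(3, m)) (d : 'cV_3),
  exists2 Z, (Z <= U1)%MS & Z *m phi (col_mx a b) = row_mx L (d *m a).

Definition plane_basis (P : 'M['F_2]_k) : 'M['F_2]_(2, k) :=
  match [pick v | (v != 0) && (<<col_mx v (sig v)>>%MS == P)] with
  | Some v => col_mx v (sig v)
  | None => odflt 0 [pick Q : 'M['F_2]_(2, k) | (\rank Q == 2%N) && (<<Q>>%MS == P)]
  end.

Lemma plane_basisP P : P \in planes k ->
  \rank (plane_basis P) = 2%N /\ (P <= plane_basis P)%MS.
Proof.
rewrite inE => /andP [P_sub /eqP rP]; rewrite /plane_basis.
case: pickP => [v /andP [v_neq0 /eqP <-] | _]; first by rewrite sig_rank ?genmxE.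
case: pickP => [Q /andP [/eqP rQ /eqP <-] | noQ]; first by rewrite genmxE.
have [W [WP W_free]] := exists_basis rP.
by have := noQ W; rewrite (eqP W_free) (eq_genmx WP) (eqP P_sub) !eqxx.
Qed.

(* On the planes <v, sig v> the chosen basis is (v, sig v); this relies on
   the injectivity of v |-> <v, sig v>. *)
Lemma plane_basis_sig v : v != 0 -> plane_basis <<col_mx v (sig v)>>%MS = col_mx v (sig v).
Proof.
move=> v_neq0; rewrite /plane_basis; case: pickP => [w /andP [w_neq0 /eqP vw] | none].
  have : (col_mx w (sig w) <= <<col_mx v (sig v)>>)%MS by rewrite -vw genmxE.
  by rewrite genmxE => /(sig_inj v_neq0 w_neq0) ->.
by have := none v; rewrite v_neq0 eqxx.
Qed.

Definition outside := [set X in S | ~~ (X <= U1)%MS && ~~ (X <= U2)%MS && ~~ (X <= U3)%MS].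
Definition inside1 := [set X in S | (X <= U1)%MS && ~~ (X <= U0)%MS].

Definition embed_blocks := [set <<X *m embed _ m k>>%MS | X in SE].
Definition graph_blocks :=
  [set <<row_mx (pid_mx k *m A) (1%:M : 'M['F_2]_k)>>%MS | A in H].
Definition plane_blocks :=
  [set <<X *m phi Q>>%MS | Q in plane_basis @: planes k, X in outside].
Definition line_blocks :=
  [set <<X *m phi (col_mx v (sig v))>>%MS | v in [set v | v != 0], X in inside1].
Definition blocks := embed_blocks :|: graph_blocks :|: plane_blocks :|: line_blocks.

Lemma S_rank X : X \in S -> \rank X = k.
Proof. by case/andP: S_cov => /forallP /(_ X) + _ XS; rewrite XS => /andP [_ /eqP]. Qed.

Lemma S_cover3 (Z : 'M['F_2]_(3, m + 2)) : \rank Z = 3%N -> exists2 X, X \in S & (Z <= X)%MS.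
Proof.
move=> rZ; case/andP: S_cov => _ /forallP /(_ <<Z>>%MS).
rewrite /subspace genmx_id eqxx mxrank_gen rZ /= => /existsP [X /andP [XS ZX]].
by exists X; rewrite // -genmxE.
Qed.

Lemma lift_rank Q X : \rank Q = 2%N -> X \in S -> \rank <<X *m phi Q>>%MS = k.
Proof. by move=> rQ XS; rewrite mxrank_gen mxrankMfree ?phi_free ?S_rank. Qed.

Lemma U0_sub1 : (U0 <= U1)%MS. Proof. by rewrite -(eqmxP U12) capmxSl. Qed.
Lemma U0_sub2 : (U0 <= U2)%MS. Proof. by rewrite -(eqmxP U12) capmxSr. Qed.
Lemma U0_sub3 : (U0 <= U3)%MS. Proof. by rewrite -(eqmxP U13) capmxSr. Qed.

Lemma blocks_dim B : B \in blocks -> subspace B && (\rank B == k).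
Proof.
rewrite !in_setU => /orP [/orP [/orP [] | ] | ].
- case/imsetP => X XSE ->; rewrite /subspace genmx_id eqxx mxrank_gen mxrankMfree ?embed_free //.
  by case/andP: SE_cov => /forallP /(_ X); rewrite XSE /= => /andP [_ ->].
- case/imsetP => A _ ->; rewrite /subspace genmx_id eqxx mxrank_gen /=.
  have /eqP -> // : row_free (row_mx (pid_mx k *m A) (1%:M : 'M['F_2]_k)).
  by apply/row_freeP; exists (col_mx 0 1%:M); rewrite mul_row_col mulmx0 add0r mulmx1.
- case/imset2P => Q X /imsetP [P /plane_basisP [rQ _] ->]; rewrite inE => /andP [XS _] ->.
  by rewrite /subspace genmx_id lift_rank ?eqxx.
- case/imset2P => v X; rewrite !inE => v_neq0 /andP [XS _] ->.
  by rewrite /subspace genmx_id lift_rank ?sig_rank ?eqxx.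
Qed.

Lemma lift_rsub_U0 Q (Z : 'M['F_2]_(3, m + 2)) : (Z <= U0)%MS -> rsubmx (Z *m phi Q) = 0.
Proof. by case/submxP => D ->; rewrite -mulmx_rsub -mulmxA phi_U0 mulmx0. Qed.

Lemma cover_rank0 (Y : 'M['F_2]_(3, m + k)) : \rank Y = 3%N -> \rank (rsubmx Y) = 0%N ->
  exists2 B, B \in blocks & (Y <= B)%MS.
Proof.
move=> rY /eqP; rewrite mxrank_eq0 => /eqP R0.
have YE : Y = lsubmx Y *m embed _ m k.
  by rewrite -{1}(hsubmxK Y) R0 /embed mul_mx_row mulmx1 mulmx0.
have rL : \rank (lsubmx Y) = 3%N by move: rY; rewrite {1}YE mxrankMfree ?embed_free.
case/andP: SE_cov => _ /forallP /(_ <<lsubmx Y>>%MS).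
rewrite /subspace genmx_id eqxx mxrank_gen rL /= => /existsP [X /andP [XSE LX]].
exists <<X *m embed _ m k>>%MS; first by rewrite !in_setU /embed_blocks imset_f.
by rewrite genmxE YE submxMr // -genmxE.
Qed.

(* A 3-space meeting F_2^k in a line is the image of a 3-space inside U1,
   covered by a line block or a plane block. *)
Lemma cover_rank1 (Y : 'M['F_2]_(3, m + k)) : \rank Y = 3%N -> \rank (rsubmx Y) = 1%N ->
  exists2 B, B \in blocks & (Y <= B)%MS.
Proof.
move=> rY rR; have [v v_neq0 Rv] : exists2 v : 'rV_k, v != 0 & (rsubmx Y <= v)%MS.
  case: (pickP (fun i => row i (rsubmx Y) != 0)) => [i Ri | R0]; last first.
    have : rsubmx Y = 0 by apply/row_matrixP => i; rewrite row0; apply/eqP/negbFE/R0.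
    by move/eqP; rewrite -mxrank_eq0 rR.
  exists (row i (rsubmx Y)) => //.
  by rewrite -(geq_leqif (mxrank_leqif_sup (row_sub i _))) rR rank_rV Ri.
have [D RD] := submxP Rv; pose Q := col_mx v (sig v).
have [Z ZU1] := phi_lift_line v (sig v) (lsubmx Y) D; rewrite -RD hsubmxK => ZY.
have rZ : \rank Z = 3%N by move: rY; rewrite -ZY mxrankMfree ?phi_free ?sig_rank.
have ZU0 : ~~ (Z <= U0)%MS.
  by apply/negP => /(lift_rsub_U0 Q); rewrite ZY => /eqP; rewrite -mxrank_eq0 rR.
have [X XS ZX] := S_cover3 rZ.
have XU0 : ~~ (X <= U0)%MS by apply: contra ZU0; apply: submx_trans ZX.
exists <<X *m phi Q>>%MS; last by rewrite genmxE -ZY submxMr.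
rewrite !in_setU; case XU1: (X <= U1)%MS.
  by apply/orP; right; apply: imset2_f; rewrite !inE ?v_neq0 ?XS ?XU1.
have XU (U : 'M['F_2]_(m + 2)) : (U1 :&: U == U0)%MS -> ~~ (X <= U)%MS.
  move=> U1U; apply: contra ZU0 => XU.
  by rewrite -(eqmxP U1U) sub_capmx ZU1 (submx_trans ZX XU).
apply/orP; left; apply/orP; right; rewrite /Q -plane_basis_sig //.
apply: imset2_f; last by rewrite inE XS XU1 !XU.
by apply: imset_f; rewrite inE /subspace genmx_id eqxx mxrank_gen sig_rank.
Qed.

(* A 3-space meeting F_2^k in a plane lifts to a 3-space avoiding U1, U2, U3,
   and is covered by a plane block. *)
Lemma cover_rank2 (Y : 'M['F_2]_(3, m + k)) : \rank Y = 3%N -> \rank (rsubmx Y) = 2%N ->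
  exists2 B, B \in blocks & (Y <= B)%MS.
Proof.
move=> rY rR.
have P_plane : <<rsubmx Y>>%MS \in planes k.
  by rewrite inE /subspace genmx_id eqxx mxrank_gen rR.
have [rQ RQ] := plane_basisP P_plane; set Q := plane_basis _ in rQ RQ.
have /submxP [D RD] : (rsubmx Y <= Q)%MS by rewrite -genmxE.
have [Z] := phi_lift Q (lsubmx Y) D; rewrite -RD hsubmxK => ZY.
have rZ : \rank Z = 3%N by move: rY; rewrite -ZY mxrankMfree ?phi_free.
have [X XS ZX] := S_cover3 rZ.
have XU (V : 'M['F_2]_(m + 2)) : (U0 <= V)%MS -> \rank V = (m + 1)%N -> ~~ (X <= V)%MS.
  move=> U0V rV; apply/negP => XV.
  have RV : (rsubmx Y <= V *m rsubmx (phi Q))%MS.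
    by rewrite -ZY -mulmx_rsub submxMr // (submx_trans ZX XV).
  have := rank_hyperplane_image U0V _ (phi_U0 Q); rewrite rV rU0 addn1 => /(_ erefl).
  by move/(leq_trans (mxrankS RV)); rewrite rR.
exists <<X *m phi Q>>%MS; last by rewrite genmxE -ZY submxMr.
rewrite !in_setU; apply/orP; left; apply/orP; right.
apply: imset2_f; first exact: imset_f.
by rewrite inE XS !XU ?U0_sub1 ?U0_sub2 ?U0_sub3.
Qed.

(* A 3-space projecting onto a 3-space of F_2^k is the graph of a linear map
   interpolated by H, hence lies in a graph block. *)
Lemma cover_rank3 (Y : 'M['F_2]_(3, m + k)) : \rank Y = 3%N -> \rank (rsubmx Y) = 3%N ->
  exists2 B, B \in blocks & (Y <= B)%MS.
Proof.
move=> _ rR; pose J : 'M['F_2]_(k, m) := pid_mx k.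
have J_free : row_free J by rewrite /row_free rank_pid_mx.
have RJ_free : row_free (rsubmx Y *m J) by rewrite /row_free mxrankMfree // rR.
have [A AH RJA] := H_interp (lsubmx Y) RJ_free.
exists <<row_mx (pid_mx k *m A) (1%:M : 'M['F_2]_k)>>%MS.
  by rewrite !in_setU /graph_blocks imset_f ?orbT.
rewrite genmxE; apply/submxP; exists (rsubmx Y).
by rewrite mul_mx_row mulmx1 mulmxA RJA hsubmxK.
Qed.

Lemma blocks_cover : is_covering k 3 blocks.
Proof.
apply/andP; split; first by apply/forallP => B; apply/implyP; exact: blocks_dim.
apply/forallP => Y; apply/implyP => /andP [_ /eqP rY]; apply/existsP.
have [W [WY W_free]] := exists_basis rY.
have rW : \rank W = 3%N by rewrite WY.
suff [B B_block WB] : exists2 B, B \in blocks & (W <= B)%MS.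
  by exists B; rewrite B_block -WY.
move: (rank_leq_row (rsubmx W)); case rR: (\rank (rsubmx W)) => [|[|[|[|d]]]] // _.
- exact: cover_rank0.
- exact: cover_rank1.
- exact: cover_rank2.
- exact: cover_rank3.
Qed.

Lemma card_blocks : (#|H| <= 2 ^ (3 * m))%N ->
  (#|blocks| <= #|SE| + 2 ^ (3 * m) + gauss2 k * #|outside| + (2 ^ k - 1) * #|inside1|)%N.
Proof.
move=> H_card; rewrite /blocks.
apply: leq_trans (leq_card_setU _ _) _; apply: leq_add; last first.
  rewrite /line_blocks curry_imset2X; apply: leq_trans (leq_imset_card _ _) _.
  rewrite cardsX leq_mul2r; apply/orP; right.
  have := cardC1 (0 : 'rV['F_2]_k); rewrite card_mx card_Fp // mul1n subn1 => <-.
  by apply: subset_leq_card; apply/subsetP => v; rewrite !inE.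
apply: leq_trans (leq_card_setU _ _) _; apply: leq_add; last first.
  rewrite /plane_blocks curry_imset2X; apply: leq_trans (leq_imset_card _ _) _.
  rewrite cardsX leq_mul2r; apply/orP; right.
  exact: leq_trans (leq_imset_card _ _) (card_planes k).
apply: leq_trans (leq_card_setU _ _) _; apply: leq_add.
  exact: leq_imset_card.
exact: leq_trans (leq_imset_card _ _) H_card.
Qed.

End Construction.

Lemma recursive_bound m k (k_le_m : (k <= m)%N) (k_ge3 : (3 <= k)%N)
  (S : {set 'M['F_2]_(m + 2)}) (S_cov : is_covering k 3 S)
  (U0 U1 U2 U3 : 'M['F_2]_(m + 2))
  (rU0 : \rank U0 = m) (rU1 : \rank U1 = (m + 1)%N) (rU2 : \rank U2 = (m + 1)%N)
  (rU3 : \rank U3 = (m + 1)%N)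
  (U12 : (U1 :&: U2 == U0)%MS) (U13 : (U1 :&: U3 == U0)%MS) :
  (covering_number (m + k) k 3 <= 2 ^ (3 * m) + gauss2 k * #|outside S U1 U2 U3|
     + (2 ^ k - 1) * #|inside1 S U0 U1| + covering_number m k 3)%N.
Proof.
have [SE SE_cov SE_card] := @covering_number_attained m k 3 (introT andP (conj k_ge3 k_le_m)).
have [H [H_card H_interp]] := linearized_interpolation 3 m.
have [sig [sig_rank sig_inj]] := plane_family k_ge3.
have [phi [phi_free phi_U0 phi_lift phi_lift_line]] := lift_maps k rU0 rU1 (U0_sub1 U12).
have cover := blocks_cover k_le_m S_cov rU0 rU1 rU2 rU3 U12 U13 SE_cov H_interp
  sig_rank sig_inj phi_free phi_U0 phi_lift phi_lift_line.
apply: leq_trans (covering_number_le cover) _.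
apply: leq_trans (card_blocks _ _ _ _ _ _ _ _ H_card) _.
by rewrite SE_card; lia.
Qed.

Section BlockCounting.

Variables (m : nat) (S : {set 'M['F_2]_(m + 2)}) (U0 U1 U2 U3 : 'M['F_2]_(m + 2)).

Definition blocks_in (U : 'M['F_2]_(m + 2)) := [set X in S | (X <= U)%MS].

Lemma card_inside1 : (U0 <= U1)%MS ->
  (#|inside1 S U0 U1| + #|blocks_in U0| = #|blocks_in U1|)%N.
Proof.
move=> U01; have := cardsID (blocks_in U0) (blocks_in U1).
have -> : blocks_in U1 :&: blocks_in U0 = blocks_in U0.
  by apply/setIidPr/subsetP => X; rewrite !inE => /andP [-> /submx_trans->].
have -> : blocks_in U1 :\: blocks_in U0 = inside1 S U0 U1.
  by apply/setP => X; rewrite !inE; case: (X \in S); rewrite ?andbF // andbC.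
by rewrite addnC.
Qed.

Hypotheses (U12 : (U1 :&: U2 == U0)%MS) (U13 : (U1 :&: U3 == U0)%MS).
Hypothesis U23 : (U2 :&: U3 == U0)%MS.

(* Each block of S lies in at most one Ui unless it lies in U0, which it then
   does in all three. *)
Lemma card_outside : (#|outside S U1 U2 U3| + #|blocks_in U1| + #|blocks_in U2|
  + #|blocks_in U3| = #|S| + 2 * #|blocks_in U0|)%N.
Proof.
have capI (U V : 'M['F_2]_(m + 2)) : (U :&: V == U0)%MS ->
    blocks_in U :&: blocks_in V = blocks_in U0.
  move=> /eqmxP UV; apply/setP => X; rewrite !inE.
  by case: (X \in S) => //=; rewrite -sub_capmx UV.
have I123 : (blocks_in U1 :|: blocks_in U2) :&: blocks_in U3 = blocks_in U0.
  by rewrite setIUl !capI // setUid.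
have := cardsUI (blocks_in U1) (blocks_in U2); rewrite capI //.
have := cardsUI (blocks_in U1 :|: blocks_in U2) (blocks_in U3); rewrite I123.
have := cardsID (blocks_in U1 :|: blocks_in U2 :|: blocks_in U3) S.
have -> : S :&: (blocks_in U1 :|: blocks_in U2 :|: blocks_in U3) =
    blocks_in U1 :|: blocks_in U2 :|: blocks_in U3.
  by apply/setIidPr/subsetP => X; rewrite !inE -!andb_orr => /andP [].
have -> : S :\: (blocks_in U1 :|: blocks_in U2 :|: blocks_in U3) = outside S U1 U2 U3.
  by apply/setP => X; rewrite !inE; case: (X \in S); rewrite /= ?andbT ?andbF ?negb_or.
lia.
Qed.

End BlockCounting.

(* Theorem 14, with m = n - k.  The ordering c U1 <= c U2 <= c U3 only makes
   the bound as good as possible; the argument works for any labelling. *)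
Theorem mainTheorem14 (n k : nat) (hn : (2 * k <= n)%N) (hk : (6 <= 2 * k)%N)
  (S : {set 'M['F_2]_(n - k + 2)}) (hS : is_covering k 3 S)
  (U0 U1 U2 U3 : 'M['F_2]_(n - k + 2))
  (hU0 : \rank U0 = (n - k)%N)
  (hU1 : \rank U1 = (n - k + 1)%N) (hU2 : \rank U2 = (n - k + 1)%N)
  (hU3 : \rank U3 = (n - k + 1)%N)
  (h12 : (U1 :&: U2 == U0)%MS) (h13 : (U1 :&: U3 == U0)%MS)
  (h23 : (U2 :&: U3 == U0)%MS) :
  let c := fun U : 'M['F_2]_(n - k + 2) => #|[set X in S | (X <= U)%MS]| in
  (c U1 <= c U2)%N -> (c U2 <= c U3)%N ->
  (covering_number n k 3)%:Z <=
    (2 ^ (3 * (n - k)))%:Z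
    + (gauss2 k)%:Z * (#|S|%:Z - (c U1)%:Z - (c U2)%:Z - (c U3)%:Z + 2 * (c U0)%:Z)
    + (2 ^ k - 1)%:Z * ((c U1)%:Z - (c U0)%:Z)
    + (covering_number (n - k) k 3)%:Z.
Proof.
move=> c _ _.
have k_le_m : (k <= n - k)%N by lia.
have k_ge3 : (3 <= k)%N by lia.
have := recursive_bound k_le_m k_ge3 hS hU0 hU1 hU2 hU3 h12 h13.
rewrite subnK; last by lia.
have card_out := card_outside S h12 h13 h23.
have card_in1 := card_inside1 S (U0_sub1 h12).
have -> : #|S|%:Z - (c U1)%:Z - (c U2)%:Z - (c U3)%:Z + 2 * (c U0)%:Z =
    #|outside S U1 U2 U3|%:Z by move: card_out; rewrite /c /blocks_in; lia.
have -> : (c U1)%:Z - (c U0)%:Z = #|inside1 S U0 U1|%:Z.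
  by move: card_in1; rewrite /c /blocks_in; lia.
by rewrite -!PoszM -!PoszD lez_nat.
Qed.
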